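(* Let $\{q_k:k\ge0\}$ be a non-decreasing sequence of nonnegative numbers with $q_0>0$. There is a constant $c>0$ such that for all $N\in\mathbb N$, all $n\ge M_N$, all $0\le k\le N-1$, $k+1\le l\le N$ and all $x\in I_N^{k,l}$, $$\int_{I_N}\left|\frac1{Q_n}\sum_{j=M_N}^{n}q_{n-j}D_j(x-t)\right|d\mu(t)\le\frac{cM_lM_k}{M_N^2}.$$
   Context: Let $m=(m_0,m_1,\dots)$ be a bounded sequence of integers $m_k\ge 2$; $G_m=\prod_k Z_{m_k}$ (compact abelian group under coordinatewise addition mod $m_k$) with Haar probability measure $\mu$; $M_0=1$, $M_{k+1}=m_kM_k$, $n=\sum_j n_jM_j$ with $n_j\in Z_{m_j}$. $I_N=\{x: x_0=\dots=x_{N-1}=0\}$. For $0\le k<l<N$, $I_N^{k,l}$ is the set of $x\in G_m$ with $x_0=\dots=x_{k-1}=0$, $x_k\ne0$, $x_{k+1}=\dots=x_{l-1}=0$, $x_l\ne0$ (other coordinates arbitrary); for $0\le k<N$, $I_N^{k,N}$ is the set of $x$ with $x_0=\dots=x_{k-1}=0$, $x_k\ne 0$, $x_{k+1}=\dots=x_{N-1}=0$. $r_k(x)=\exp(2\pi i x_k/m_k)$, $\psi_n=\prod_k r_k^{n_k}$, $D_n=\sum_{k=0}^{n-1}\psi_k$, $Q_n=\sum_{k=0}^{n-1}q_k$. *)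

From Stdlib Require Import Reals Arith List.
Open Scope R_scope.

Fixpoint sumR (f : nat -> R) (n : nat) : R :=
  match n with
  | O => 0
  | S n' => sumR f n' + f n'
  end.

Fixpoint Mk (m : nat -> nat) (k : nat) : nat :=
  match k with
  | O => 1%nat
  | S k' => (m k' * Mk m k')%nat
  end.

Definition digit (m : nat -> nat) (n j : nat) : nat :=
  ((n / Mk m j) mod m j)%nat.

(* elements of G_m are represented as x : nat -> nat with x k < m k *)
Definition inG (m : nat -> nat) (x : nat -> nat) : Prop :=
  forall k, (x k < m k)%nat.

(* x - t in G_m (coordinatewise mod m_k), for t in G_m *)
Definition gsub (m : nat -> nat) (x t : nat -> nat) : nat -> nat :=
  fun k => ((x k + (m k - t k)) mod m k)%nat.

(* psi_n(z) = prod_k r_k(z)^{n_k} = exp(i * psi_arg n z); digits n_k vanish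
   for k >= n (since M_k >= 2^k > n), so the sum over k <= n is the full sum *)
Definition psi_arg (m : nat -> nat) (n : nat) (z : nat -> nat) : R :=
  2 * PI * sumR (fun k => INR (digit m n k * z k) / INR (m k)) (S n).

(* real and imaginary parts of D_n(z) = sum_{i<n} psi_i(z) *)
Definition D_re (m : nat -> nat) (n : nat) (z : nat -> nat) : R :=
  sumR (fun i => cos (psi_arg m i z)) n.
Definition D_im (m : nat -> nat) (n : nat) (z : nat -> nat) : R :=
  sumR (fun i => sin (psi_arg m i z)) n.

Definition Qn (q : nat -> R) (n : nat) : R := sumR q n.

Definition sum_from_to (f : nat -> R) (a b : nat) : R :=
  sumR (fun i => f (a + i)%nat) (S b - a).

Definition K_re (m : nat -> nat) (q : nat -> R) (N n : nat) (z : nat -> nat) : R :=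
  / Qn q n * sum_from_to (fun j => q (n - j)%nat * D_re m j z) (Mk m N) n.
Definition K_im (m : nat -> nat) (q : nat -> R) (N n : nat) (z : nat -> nat) : R :=
  / Qn q n * sum_from_to (fun j => q (n - j)%nat * D_im m j z) (Mk m N) n.

Definition cabs (re im : R) : R := sqrt (re * re + im * im).

Definition inIN (N : nat) (t : nat -> nat) : bool :=
  forallb (fun j => Nat.eqb (t j) 0) (seq 0 N).

(* Haar integral of a function depending only on the coordinates < K:
   int_{G_m} f dmu = (1/M_K) sum over (t_0,...,t_{K-1}) of f(t),
   the tuples being enumerated by s < M_K through their digits. *)
Definition haar_int_cyl (m : nat -> nat) (K : nat) (f : (nat -> nat) -> R) : R :=
  / INR (Mk m K) * sumR (fun s => f (fun k => digit m s k)) (Mk m K).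

Definition in_INkl (N k l : nat) (x : nat -> nat) : Prop :=
  (forall j, (j < k)%nat -> x j = 0%nat) /\ x k <> 0%nat /\
  (forall j, (k < j)%nat -> (j < l)%nat -> x j = 0%nat) /\
  (if Nat.ltb l N then x l <> 0%nat else True).

From Stdlib Require Import Reals Arith List Lra Lia.
From Coquelicot Require Import Coquelicot.
Open Scope R_scope.

(* If x_k <> 0, the characters psi_i sum to zero over every block of length M_L
   with L > k, so D_(b M_L + r) = psi_(b M_L) D_r for r <= M_L and |D_r| <= M_(k+1).
   Cutting p <= M_N into blocks of length M_l, whose character factors psi_(b M_l)
   have bounded partial sums when x_l <> 0 (and at most one term when l = N),
   bounds |sum_(r<p) D_r| by (m_l + 1) M_l M_(k+1).  Abel summation against the
   nonincreasing weights q_(u-i) bounds each length-M_N block of the kernel sum by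
   q_u times that constant; since q is nondecreasing, M_N q_u is at most the sum of
   q over the next window of length M_N, so on I_N the kernel is at most
   c M_l M_k / M_N.  Integrating over I_N, of Haar measure 1/M_N, gives the bound. *)

Definition cexp (th : R) : C := (cos th, sin th).

Fixpoint csum (f : nat -> C) (n : nat) : C :=
  match n with
  | O => RtoC 0
  | S n' => (csum f n' + f n')%C
  end.

Lemma cexp_add a b : cexp (a + b) = (cexp a * cexp b)%C.
Proof. unfold cexp, Cmult; simpl; rewrite cos_plus, sin_plus; f_equal; ring. Qed.

Lemma Cmod_cexp th : Cmod (cexp th) = 1.
Proof.
  unfold Cmod, cexp; simpl.
  pose proof (sin2_cos2 th) as H; unfold Rsqr in H.
  replace (cos th * (cos th * 1) + sin th * (sin th * 1)) with 1 by lra.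
  apply sqrt_1.
Qed.

Lemma cabs_Cmod w : cabs (fst w) (snd w) = Cmod w.
Proof. unfold cabs, Cmod; f_equal; simpl; ring. Qed.

Lemma Re_RtoC_mult r w : fst (RtoC r * w)%C = r * fst w.
Proof. simpl; ring. Qed.

Lemma Im_RtoC_mult r w : snd (RtoC r * w)%C = r * snd w.
Proof. simpl; ring. Qed.

Lemma fst_csum f n : fst (csum f n) = sumR (fun i => fst (f i)) n.
Proof. induction n as [|n IH]; simpl; rewrite ?IH; auto. Qed.

Lemma snd_csum f n : snd (csum f n) = sumR (fun i => snd (f i)) n.
Proof. induction n as [|n IH]; simpl; rewrite ?IH; auto. Qed.

Lemma csum_ext f g n :
  (forall i, (i < n)%nat -> f i = g i) -> csum f n = csum g n.
Proof.
  induction n as [|n IH]; intros Hfg; simpl; auto.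
  rewrite IH by (intros; apply Hfg; lia); rewrite Hfg by lia; auto.
Qed.

Lemma csum_zero f n : (forall i, (i < n)%nat -> f i = RtoC 0) -> csum f n = RtoC 0.
Proof.
  induction n as [|n IH]; intros Hf; simpl; auto.
  rewrite IH by (intros; apply Hf; lia); rewrite Hf by lia; ring.
Qed.

Lemma csum_add f a b :
  csum f (a + b) = (csum f a + csum (fun i => f (a + i)%nat) b)%C.
Proof.
  induction b as [|b IH]; simpl.
  - rewrite Nat.add_0_r; ring.
  - rewrite Nat.add_succ_r; simpl; rewrite IH; ring.
Qed.

Lemma csum_mult_l c f n : csum (fun i => c * f i)%C n = (c * csum f n)%C.
Proof. induction n as [|n IH]; simpl; rewrite ?IH; ring. Qed.

Lemma csum_mult_r c f n : csum (fun i => f i * c)%C n = (csum f n * c)%C.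
Proof. induction n as [|n IH]; simpl; rewrite ?IH; ring. Qed.

Lemma csum_blocks f P b r :
  csum f (b * P + r) =
  (csum (fun c => csum (fun d => f (c * P + d)%nat) P) b
   + csum (fun d => f (b * P + d)%nat) r)%C.
Proof.
  rewrite csum_add; f_equal.
  induction b as [|b IH]; simpl; auto.
  rewrite Nat.add_comm, csum_add, IH; auto.
Qed.

Lemma Cmod_csum_le f n c :
  (forall i, (i < n)%nat -> Cmod (f i) <= c) -> Cmod (csum f n) <= INR n * c.
Proof.
  induction n as [|n IH]; intros Hf; simpl csum.
  - rewrite Cmod_0; simpl; lra.
  - eapply Rle_trans; [apply Cmod_triangle|].
    rewrite S_INR.
    assert (Cmod (csum f n) <= INR n * c) by (apply IH; intros; apply Hf; lia).
    assert (Cmod (f n) <= c) by (apply Hf; lia).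
    lra.
Qed.

Lemma Cmod_csum_vanishing_blocks_le f P n :
  (0 < P)%nat -> (forall i, Cmod (f i) <= 1) ->
  (forall c, csum (fun d => f (c * P + d)%nat) P = RtoC 0) ->
  Cmod (csum f n) <= INR P.
Proof.
  intros HP Hf Hblock.
  rewrite (Nat.div_mod n P), Nat.mul_comm, csum_blocks, csum_zero, Cplus_0_l
    by (auto; lia).
  eapply Rle_trans; [apply (Cmod_csum_le _ _ 1); auto|].
  rewrite Rmult_1_r; apply le_INR, Nat.lt_le_incl, Nat.mod_upper_bound; lia.
Qed.

Lemma csum_cexp_geometric th n :
  (csum (fun d => cexp (INR d * th)) n * (cexp th - 1))%C = (cexp (INR n * th) - 1)%C.
Proof.
  induction n as [|n IH]; simpl csum.
  - unfold cexp; rewrite Rmult_0_l, cos_0, sin_0.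
    apply injective_projections; simpl; ring.
  - rewrite Cmult_plus_distr_r, IH, S_INR, Rmult_plus_distr_r, Rmult_1_l, cexp_add.
    ring.
Qed.

Lemma cexp_neq_1 th : 0 < th < 2 * PI -> cexp th <> RtoC 1.
Proof.
  intros Hth E.
  assert (Hcos : cos th = 1) by (apply (f_equal fst) in E; exact E).
  replace th with (2 * (th / 2)) in Hcos by field.
  rewrite cos_2a_sin in Hcos.
  assert (0 < sin (th / 2)) by (apply sin_gt_0; lra).
  nra.
Qed.

Lemma csum_roots_of_unity n j : (0 < j < n)%nat ->
  csum (fun d => cexp (2 * PI * (INR d * INR j / INR n))) n = RtoC 0.
Proof.
  intros Hj.
  set (th := 2 * PI * INR j / INR n).
  assert (Hn : 0 < INR n) by (apply lt_0_INR; lia).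
  assert (Hjn : 0 < INR j < INR n) by (split; [apply lt_0_INR | apply lt_INR]; lia).
  pose proof PI_RGT_0.
  rewrite (csum_ext _ (fun d => cexp (INR d * th)))
    by (intros; unfold th; f_equal; field; lra).
  assert (Hw : (cexp th - 1)%C <> RtoC 0).
  { intros E; apply (cexp_neq_1 th).
    - unfold th; split.
      + apply Rdiv_lt_0_compat; nra.
      + apply Rmult_lt_reg_r with (INR n); auto.
        unfold Rdiv; rewrite Rmult_assoc, Rinv_l by lra; nra.
    - rewrite <- (Cplus_0_l 1), <- E; ring. }
  pose proof (csum_cexp_geometric th n) as G.
  assert (Hper : cexp (INR n * th) = RtoC 1).
  { replace (INR n * th) with (0 + 2 * INR j * PI) by (unfold th; field; lra).
    unfold cexp; rewrite cos_period, sin_period, cos_0, sin_0; auto. }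
  rewrite Hper in G.
  replace (RtoC 1 - 1)%C with (RtoC 0) in G by (apply injective_projections; simpl; ring).
  rewrite <- (Cmult_1_r (csum _ n)), <- (Cinv_r _ Hw), Cmult_assoc, G; ring.
Qed.

Lemma csum_S f n : csum f (S n) = (csum f n + f n)%C.
Proof. reflexivity. Qed.

Lemma csum_abel (w : nat -> R) (d : nat -> C) P :
  csum (fun r => RtoC (w r) * d r)%C P =
  (csum (fun r => (RtoC (w r) - RtoC (w (S r))) * csum d (S r)) P
   + RtoC (w P) * csum d P)%C.
Proof. induction P as [|P IH]; simpl csum; [ring|]; rewrite IH; simpl csum; ring. Qed.

Lemma Cmod_csum_abel_le (w : nat -> R) (d : nat -> C) P b :
  (forall r, w (S r) <= w r) -> (forall r, 0 <= w r) ->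
  (forall p, (p <= P)%nat -> Cmod (csum d p) <= b) ->
  Cmod (csum (fun r => RtoC (w r) * d r)%C P) <= w 0%nat * b.
Proof.
  intros Hw Hw0 Hd.
  assert (Hb : 0 <= b)
    by (specialize (Hd 0%nat (Nat.le_0_l _)); simpl in Hd; rewrite Cmod_0 in Hd; auto).
  assert (Htelescope : forall p, (p <= P)%nat ->
    Cmod (csum (fun r => (RtoC (w r) - RtoC (w (S r))) * csum d (S r))%C p)
    <= (w 0%nat - w p) * b).
  { induction p as [|p IH]; intros Hp.
    - simpl csum; rewrite Cmod_0; lra.
    - rewrite csum_S; eapply Rle_trans; [apply Cmod_triangle|].
      rewrite Cmod_mult, <- RtoC_minus, Cmod_R, Rabs_pos_eq by (specialize (Hw p); lra).
      assert (Cmod (csum d (S p)) <= b) by (apply Hd; lia).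
      specialize (IH ltac:(lia)); specialize (Hw p).
      assert ((w p - w (S p)) * Cmod (csum d (S p)) <= (w p - w (S p)) * b)
        by (apply Rmult_le_compat_l; lra).
      lra. }
  rewrite csum_abel; eapply Rle_trans; [apply Cmod_triangle|].
  rewrite Cmod_mult, Cmod_R, Rabs_pos_eq by auto.
  specialize (Htelescope P (Nat.le_refl _)).
  assert (w P * Cmod (csum d P) <= w P * b) by (apply Rmult_le_compat_l; auto).
  lra.
Qed.

Lemma sumR_ext f g n : (forall i, (i < n)%nat -> f i = g i) -> sumR f n = sumR g n.
Proof.
  induction n as [|n IH]; intros Hfg; simpl; auto.
  rewrite IH by (intros; apply Hfg; lia); rewrite Hfg by lia; auto.
Qed.

Lemma sumR_plus f g n : sumR (fun i => f i + g i) n = sumR f n + sumR g n.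
Proof. induction n as [|n IH]; simpl; rewrite ?IH; lra. Qed.

Lemma sumR_add f a b : sumR f (a + b) = sumR f a + sumR (fun i => f (a + i)%nat) b.
Proof.
  induction b as [|b IH]; simpl.
  - rewrite Nat.add_0_r; lra.
  - rewrite Nat.add_succ_r; simpl; rewrite IH; lra.
Qed.

Lemma sumR_le f g n : (forall i, (i < n)%nat -> f i <= g i) -> sumR f n <= sumR g n.
Proof.
  induction n as [|n IH]; intros Hfg; simpl; [lra|].
  assert (f n <= g n) by (apply Hfg; lia).
  assert (sumR f n <= sumR g n) by (apply IH; intros; apply Hfg; lia).
  lra.
Qed.

Lemma sumR_nonneg f n : (forall i, 0 <= f i) -> 0 <= sumR f n.
Proof. intros Hf; induction n as [|n IH]; simpl; [lra|]; specialize (Hf n); lra. Qed.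

Lemma sumR_const_zero n : sumR (fun _ => 0) n = 0.
Proof. induction n as [|n IH]; simpl; lra. Qed.

Lemma sumR_vanishing_tail f K L :
  (forall i, (K <= i)%nat -> f i = 0) -> (K <= L)%nat -> sumR f L = sumR f K.
Proof.
  intros Hf HKL; induction HKL as [|L HKL IH]; simpl; auto.
  rewrite IH, Hf by lia; lra.
Qed.

Lemma sumR_single f j n :
  (j < n)%nat -> (forall i, (i < n)%nat -> i <> j -> f i = 0) -> sumR f n = f j.
Proof.
  induction n as [|n IH]; intros Hj Hf; [lia|]; simpl.
  destruct (Nat.eq_dec j n) as [->|Hjn].
  - rewrite (sumR_ext f (fun _ => 0)), sumR_const_zero by (intros; apply Hf; lia); lra.
  - rewrite IH, (Hf n) by (lia || intros; apply Hf; lia); lra.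
Qed.

Section MixedRadix.

Variable m : nat -> nat.
Hypothesis m_ge2 : forall k, (2 <= m k)%nat.

Lemma Mk_pos k : (0 < Mk m k)%nat.
Proof. induction k as [|k IH]; simpl; auto; specialize (m_ge2 k); nia. Qed.

Lemma Mk_gt k : (k < Mk m k)%nat.
Proof. induction k as [|k IH]; simpl; auto; specialize (m_ge2 k); nia. Qed.

Lemma Mk_divide k L : (k <= L)%nat -> Nat.divide (Mk m k) (Mk m L).
Proof.
  induction 1 as [|L _ IH]; [apply Nat.divide_refl|].
  simpl; apply Nat.divide_mul_r, IH.
Qed.

Lemma digit_small i k : (i < Mk m k)%nat -> digit m i k = 0%nat.
Proof. intros; unfold digit; rewrite Nat.div_small by auto; apply Nat.Div0.mod_0_l. Qed.

Lemma digit_mul_Mk_low c L k : (k < L)%nat -> digit m (c * Mk m L) k = 0%nat.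
Proof.
  intros HkL; destruct (Mk_divide (S k) L) as [P HP]; [lia|].
  unfold digit; rewrite HP; simpl.
  replace (c * (P * (m k * Mk m k)))%nat with (c * P * m k * Mk m k)%nat by ring.
  rewrite Nat.div_mul by (pose proof (Mk_pos k); lia).
  apply Nat.Div0.mod_mul.
Qed.

Lemma digit_add c L s k : (s < Mk m L)%nat ->
  digit m (c * Mk m L + s) k = (digit m (c * Mk m L) k + digit m s k)%nat.
Proof.
  intros Hs; pose proof (Mk_pos k) as Hk.
  destruct (Nat.lt_ge_cases k L) as [HkL|HLk].
  - rewrite digit_mul_Mk_low by auto.
    destruct (Mk_divide (S k) L) as [P HP]; [lia|].
    unfold digit; rewrite HP; simpl.
    replace (c * (P * (m k * Mk m k)) + s)%nat with (s + c * P * m k * Mk m k)%nat by ring.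
    rewrite Nat.div_add, Nat.Div0.mod_add by lia; auto.
  - destruct (Mk_divide L k HLk) as [P HP].
    assert (P <> 0%nat) by (intros ->; lia).
    rewrite (digit_small s k) by nia.
    pose proof (Mk_pos L).
    unfold digit; rewrite HP, (Nat.mul_comm P), <- !Nat.Div0.div_div.
    rewrite Nat.div_add_l, Nat.div_mul, (Nat.div_small s), Nat.add_0_r by lia; lia.
Qed.

Lemma digit_mul_Mk d L k : (d < m L)%nat ->
  digit m (d * Mk m L) k = if Nat.eqb k L then d else 0%nat.
Proof.
  intros Hd.
  destruct (Nat.lt_trichotomy k L) as [HkL|[->|HLk]].
  - rewrite digit_mul_Mk_low by auto; destruct (Nat.eqb_spec k L); lia.
  - rewrite Nat.eqb_refl; unfold digit.
    rewrite Nat.div_mul by (pose proof (Mk_pos L); lia); apply Nat.mod_small; auto.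
  - destruct (Nat.eqb_spec k L); [lia|].
    apply digit_small.
    destruct (Mk_divide (S L) k) as [P HP]; [lia|].
    assert (P <> 0%nat) by (intros ->; pose proof (Mk_pos k); lia).
    pose proof (Mk_pos L); rewrite HP; simpl.
    apply Nat.lt_le_trans with (m L * Mk m L)%nat; [apply Nat.mul_lt_mono_pos_r|]; nia.
Qed.

Lemma digit_eq_0_mod N s :
  (forall j, (j < N)%nat -> digit m s j = 0%nat) -> (s mod Mk m N = 0)%nat.
Proof.
  induction N as [|N IH]; intros Hs; [apply Nat.mod_1_r|].
  simpl; rewrite Nat.mul_comm, Nat.Div0.mod_mul_r, IH by (intros; apply Hs; lia).
  specialize (Hs N ltac:(lia)); unfold digit in Hs; rewrite Hs; lia.
Qed.

Definition psi_term (i : nat) (z : nat -> nat) (k : nat) : R :=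
  INR (digit m i k * z k) / INR (m k).

Lemma psi_arg_as_sum i z K : (i < K)%nat ->
  psi_arg m i z = 2 * PI * sumR (psi_term i z) K.
Proof.
  intros HiK; unfold psi_arg; f_equal; symmetry.
  apply sumR_vanishing_tail; [|lia].
  intros k Hk; unfold psi_term.
  rewrite digit_small by (pose proof (Mk_gt k); lia); simpl; unfold Rdiv; ring.
Qed.

Lemma psi_arg_add c L s z : (s < Mk m L)%nat ->
  psi_arg m (c * Mk m L + s) z = psi_arg m (c * Mk m L) z + psi_arg m s z.
Proof.
  intros Hs; set (K := S (c * Mk m L + s)).
  rewrite !(psi_arg_as_sum _ z K) by (unfold K; lia).
  rewrite <- Rmult_plus_distr_l, <- sumR_plus; f_equal.
  apply sumR_ext; intros k _; unfold psi_term.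
  rewrite digit_add, !mult_INR, plus_INR by auto.
  assert (INR (m k) <> 0) by (apply not_0_INR; specialize (m_ge2 k); lia).
  field; auto.
Qed.

Lemma psi_arg_mul_Mk d L z : (d < m L)%nat ->
  psi_arg m (d * Mk m L) z = 2 * PI * (INR d * INR (z L) / INR (m L)).
Proof.
  intros Hd.
  rewrite (psi_arg_as_sum _ z (S (d * Mk m L) + S L)) by lia; f_equal.
  rewrite (sumR_single _ L); [|lia|intros k _ Hk]; unfold psi_term;
    rewrite digit_mul_Mk by auto.
  - rewrite Nat.eqb_refl, mult_INR; auto.
  - destruct (Nat.eqb_spec k L); [lia|]; simpl; unfold Rdiv; ring.
Qed.

Definition psi (i : nat) (z : nat -> nat) : C := cexp (psi_arg m i z).

Definition Dc (n : nat) (z : nat -> nat) : C := csum (fun i => psi i z) n.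

Lemma Cmod_psi i z : Cmod (psi i z) = 1.
Proof. apply Cmod_cexp. Qed.

Lemma psi_add c L s z : (s < Mk m L)%nat ->
  psi (c * Mk m L + s) z = (psi (c * Mk m L) z * psi s z)%C.
Proof. intros; unfold psi; rewrite psi_arg_add by auto; apply cexp_add. Qed.

Lemma csum_psi_mul_Mk L z : (0 < z L < m L)%nat ->
  csum (fun d => psi (d * Mk m L) z) (m L) = RtoC 0.
Proof.
  intros HzL; unfold psi.
  rewrite (csum_ext _ (fun d => cexp (2 * PI * (INR d * INR (z L) / INR (m L)))))
    by (intros; rewrite psi_arg_mul_Mk; auto).
  apply csum_roots_of_unity; auto.
Qed.

Lemma Dc_Mk_S L z :
  Dc (Mk m (S L)) z = (csum (fun d => psi (d * Mk m L) z) (m L) * Dc (Mk m L) z)%C.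
Proof.
  unfold Dc; replace (Mk m (S L)) with (m L * Mk m L + 0)%nat by (simpl; lia).
  rewrite csum_blocks; simpl csum at 2; rewrite Cplus_0_r, <- csum_mult_r.
  apply csum_ext; intros d _; rewrite <- csum_mult_l.
  apply csum_ext; intros s Hs; apply psi_add; auto.
Qed.

Lemma Cmod_csum_psi_mul_Mk_le l z b : (0 < z l < m l)%nat ->
  Cmod (csum (fun c => psi (c * Mk m l) z) b) <= INR (m l).
Proof.
  intros Hzl; apply Cmod_csum_vanishing_blocks_le.
  - specialize (m_ge2 l); lia.
  - intros; apply Req_le, Cmod_psi.
  - intros c.
    rewrite (csum_ext _ (fun d => psi (c * Mk m (S l)) z * psi (d * Mk m l) z)%C).
    + rewrite csum_mult_l, csum_psi_mul_Mk by auto; ring.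
    + intros d Hd; pose proof (Mk_pos l).
      rewrite <- psi_add by (simpl; nia); f_equal; simpl; ring.
Qed.

Section NonzeroDigit.

Variables (k : nat) (z : nat -> nat).
Hypothesis z_k : (0 < z k < m k)%nat.

Lemma Dc_Mk_eq_0 L : (k < L)%nat -> Dc (Mk m L) z = RtoC 0.
Proof.
  induction L as [|L IH]; intros HkL; [lia|].
  rewrite Dc_Mk_S; destruct (Nat.eq_dec k L) as [<-|HkL'].
  - rewrite csum_psi_mul_Mk by auto; ring.
  - rewrite IH by lia; ring.
Qed.

Lemma Dc_shift L b r : (k < L)%nat -> (r <= Mk m L)%nat ->
  Dc (b * Mk m L + r) z = (psi (b * Mk m L) z * Dc r z)%C.
Proof.
  intros HkL Hr; unfold Dc at 1; rewrite csum_blocks, csum_zero, Cplus_0_l.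
  - unfold Dc; rewrite <- csum_mult_l; apply csum_ext; intros; apply psi_add; lia.
  - intros c _.
    rewrite (csum_ext _ (fun s => psi (c * Mk m L) z * psi s z)%C)
      by (intros; apply psi_add; auto).
    rewrite csum_mult_l; fold (Dc (Mk m L) z); rewrite Dc_Mk_eq_0 by auto; ring.
Qed.

Lemma Cmod_Dc_le r : Cmod (Dc r z) <= INR (Mk m (S k)).
Proof.
  apply Cmod_csum_vanishing_blocks_le.
  - apply Mk_pos.
  - intros; apply Req_le, Cmod_psi.
  - intros c.
    rewrite (csum_ext _ (fun s => psi (c * Mk m (S k)) z * psi s z)%C)
      by (intros; apply psi_add; auto).
    rewrite csum_mult_l; fold (Dc (Mk m (S k)) z); rewrite Dc_Mk_eq_0 by lia; ring.
Qed.

End NonzeroDigit.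

Lemma D_re_eq n z : D_re m n z = fst (Dc n z).
Proof. unfold D_re, Dc; rewrite fst_csum; reflexivity. Qed.

Lemma D_im_eq n z : D_im m n z = snd (Dc n z).
Proof. unfold D_im, Dc; rewrite snd_csum; reflexivity. Qed.

Section KernelBound.

Variables (N k l : nat) (z : nat -> nat) (q : nat -> R).
Hypotheses (k_lt_l : (k < l)%nat) (l_le_N : (l <= N)%nat).
Hypotheses (z_k : (0 < z k < m k)%nat) (z_l : (l < N)%nat -> (0 < z l < m l)%nat).
Hypotheses (q_nonneg : forall j, 0 <= q j) (q_nondecr : forall j, q j <= q (S j)).
Hypothesis q0_pos : 0 < q 0%nat.

Lemma Cmod_csum_Dc_le p : (p <= Mk m N)%nat ->
  Cmod (csum (fun r => Dc r z) p) <= INR (S (m l) * Mk m l * Mk m (S k)).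
Proof.
  intros Hp; pose proof (Mk_pos l) as Hl.
  rewrite (Nat.div_mod p (Mk m l)), Nat.mul_comm, csum_blocks by lia.
  set (b := (p / Mk m l)%nat); set (p' := (p mod Mk m l)%nat).
  assert (Hp' : (p' < Mk m l)%nat) by (apply Nat.mod_upper_bound; lia).
  rewrite (csum_ext _ (fun c => psi (c * Mk m l) z * csum (fun s => Dc s z) (Mk m l))%C)
    by (intros c _; rewrite <- csum_mult_l; apply csum_ext; intros;
        apply (Dc_shift k); auto; lia).
  rewrite (csum_ext (fun s => Dc (b * Mk m l + s) z) (fun s => psi (b * Mk m l) z * Dc s z)%C)
    by (intros; apply (Dc_shift k); auto; lia).
  rewrite csum_mult_r, csum_mult_l.
  assert (Hfull : Cmod (csum (fun s => Dc s z) (Mk m l)) <= INR (Mk m l) * INR (Mk m (S k)))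
    by (apply Cmod_csum_le; intros; apply Cmod_Dc_le; auto).
  assert (Htail : Cmod (csum (fun s => Dc s z) p') <= INR (Mk m l) * INR (Mk m (S k))).
  { eapply Rle_trans; [apply Cmod_csum_le; intros; apply (Cmod_Dc_le k); auto|].
    apply Rmult_le_compat_r; [apply pos_INR | apply le_INR; lia]. }
  assert (Hchars : Cmod (csum (fun c => psi (c * Mk m l) z) b) <= INR (m l)).
  { destruct (Nat.lt_ge_cases l N) as [HlN|HNl].
    - apply Cmod_csum_psi_mul_Mk_le; auto.
    - (* l = N: the sum over c has at most one term *)
      eapply Rle_trans; [apply (Cmod_csum_le _ _ 1); intros; apply Req_le, Cmod_psi|].
      rewrite Rmult_1_r; apply le_INR.
      assert (b <= 1)%nat by (apply Nat.Div0.div_le_upper_bound; replace l with N by lia; lia).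
      specialize (m_ge2 l); lia. }
  assert (Cmod (csum (fun c => psi (c * Mk m l) z) b) * Cmod (csum (fun s => Dc s z) (Mk m l))
          <= INR (m l) * (INR (Mk m l) * INR (Mk m (S k))))
    by (apply Rmult_le_compat; auto using Cmod_ge_0).
  eapply Rle_trans; [apply Cmod_triangle|].
  rewrite !Cmod_mult, Cmod_psi, !mult_INR, S_INR.
  lra.
Qed.

Lemma q_le i j : (i <= j)%nat -> q i <= q j.
Proof. induction 1 as [|j _ IH]; [lra|]; specialize (q_nondecr j); lra. Qed.

Lemma sumR_window_ge u M : INR M * q u <= sumR q (u + M) - sumR q u.
Proof.
  induction M as [|M IH]; [rewrite Nat.add_0_r; simpl; lra|].
  rewrite Nat.add_succ_r, S_INR; simpl sumR.
  pose proof (q_le u (u + M) ltac:(lia)); lra.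
Qed.

Lemma Cmod_weighted_block_le a u P : (P <= Mk m N)%nat ->
  Cmod (csum (fun i => RtoC (q (u - i)%nat) * Dc (a * Mk m N + i) z)%C P)
  <= q u * INR (S (m l) * Mk m l * Mk m (S k)).
Proof.
  intros HP.
  rewrite (csum_ext _ (fun i => psi (a * Mk m N) z * (RtoC (q (u - i)%nat) * Dc i z))%C)
    by (intros; rewrite (Dc_shift k) by lia; ring).
  rewrite csum_mult_l, Cmod_mult, Cmod_psi, Rmult_1_l.
  replace (q u) with (q (u - 0)%nat) by (rewrite Nat.sub_0_r; auto).
  apply (Cmod_csum_abel_le (fun r => q (u - r)%nat)).
  - intros r; apply q_le; lia.
  - auto.
  - intros p Hp; apply Cmod_csum_Dc_le; lia.
Qed.

Lemma Cmod_weighted_sum_le u a :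
  INR (Mk m N) * Cmod (csum (fun i => RtoC (q (u - i)%nat) * Dc (a * Mk m N + i) z)%C (S u))
  <= INR (S (m l) * Mk m l * Mk m (S k)) * sumR q (u + Mk m N).
Proof.
  set (cF := INR (S (m l) * Mk m l * Mk m (S k))).
  assert (HcF : 0 <= cF) by apply pos_INR.
  pose proof (Mk_pos N) as HM.
  assert (HMR : 0 <= INR (Mk m N)) by apply pos_INR.
  revert a; induction u as [u IH] using lt_wf_ind; intros a.
  pose proof (sumR_window_ge u (Mk m N)) as Hwindow.
  destruct (Nat.lt_ge_cases u (Mk m N)) as [Hu|Hu].
  - pose proof (Cmod_weighted_block_le a u (S u) ltac:(lia)) as Hblock.
    pose proof (sumR_nonneg q u q_nonneg).
    fold cF in Hblock; apply Rmult_le_compat_l with (r := INR (Mk m N)) in Hblock; auto.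
    nra.
  - replace (S u) with (Mk m N + S (u - Mk m N))%nat by lia.
    rewrite csum_add.
    rewrite (csum_ext (fun i => RtoC (q (u - (Mk m N + i))%nat)
                                * Dc (a * Mk m N + (Mk m N + i)) z)%C
                      (fun i => RtoC (q (u - Mk m N - i)%nat) * Dc (S a * Mk m N + i) z)%C)
      by (intros i _; rewrite Nat.sub_add_distr; f_equal; f_equal; simpl; lia).
    pose proof (Cmod_weighted_block_le a u (Mk m N) ltac:(lia)) as Hblock.
    fold cF in Hblock; apply Rmult_le_compat_l with (r := INR (Mk m N)) in Hblock; auto.
    pose proof (IH (u - Mk m N)%nat ltac:(lia) (S a)) as Hrest.
    replace (u - Mk m N + Mk m N)%nat with u in Hrest by lia.
    eapply Rle_trans; [apply Rmult_le_compat_l; [auto | apply Cmod_triangle]|].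
    nra.
Qed.

Lemma cabs_kernel_le n : (Mk m N <= n)%nat ->
  cabs (K_re m q N n z) (K_im m q N n z)
  <= INR (S (m l) * Mk m l * Mk m (S k)) / INR (Mk m N).
Proof.
  intros Hn; pose proof (Mk_pos N) as HM.
  pose proof (Cmod_weighted_sum_le (n - Mk m N) 1) as Hsum.
  replace (n - Mk m N + Mk m N)%nat with n in Hsum by lia.
  set (S0 := csum _ (S (n - Mk m N))) in Hsum.
  assert (HK : (K_re m q N n z, K_im m q N n z) = (RtoC (/ Qn q n) * S0)%C).
  { unfold K_re, K_im, sum_from_to, S0.
    replace (S n - Mk m N)%nat with (S (n - Mk m N)) by lia.
    apply injective_projections; cbn [fst snd].
    - rewrite Re_RtoC_mult, fst_csum; f_equal; apply sumR_ext; intros i _.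
      rewrite Re_RtoC_mult, D_re_eq, Nat.sub_add_distr, Nat.mul_1_l; auto.
    - rewrite Im_RtoC_mult, snd_csum; f_equal; apply sumR_ext; intros i _.
      rewrite Im_RtoC_mult, D_im_eq, Nat.sub_add_distr, Nat.mul_1_l; auto. }
  assert (HQ : 0 < Qn q n).
  { pose proof (sumR_window_ge 0 n) as Hw; simpl in Hw.
    assert (1 <= INR n) by (apply (le_INR 1); lia).
    unfold Qn; nra. }
  assert (HMR : 0 < INR (Mk m N)) by (apply lt_0_INR; auto).
  change (cabs (K_re m q N n z) (K_im m q N n z))
    with (cabs (fst (K_re m q N n z, K_im m q N n z)) (snd (K_re m q N n z, K_im m q N n z))).
  rewrite HK, cabs_Cmod, Cmod_mult, Cmod_R, Rabs_pos_eq
    by (left; apply Rinv_0_lt_compat; auto).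
  apply (Rmult_le_reg_l (INR (Mk m N) * Qn q n)); [nra|].
  replace (INR (Mk m N) * Qn q n * (/ Qn q n * Cmod S0)) with (INR (Mk m N) * Cmod S0)
    by (field; lra).
  replace (INR (Mk m N) * Qn q n * (INR (S (m l) * Mk m l * Mk m (S k)) / INR (Mk m N)))
    with (INR (S (m l) * Mk m l * Mk m (S k)) * Qn q n) by (field; lra).
  exact Hsum.
Qed.

End KernelBound.

Lemma sumR_indicator_mod (V : R) M P : (0 < M)%nat ->
  sumR (fun s => if Nat.eqb (s mod M) 0 then V else 0) (P * M) = INR P * V.
Proof.
  intros HM; induction P as [|P IH]; [simpl; lra|].
  replace (S P * M)%nat with (P * M + M)%nat by lia.
  rewrite sumR_add, IH, S_INR, (sumR_single _ 0%nat); [|lia|intros i Hi Hi0].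
  - rewrite Nat.add_0_r, Nat.Div0.mod_mul; simpl; ring.
  - rewrite Nat.add_comm, Nat.Div0.mod_add, Nat.mod_small by auto.
    destruct i; [lia | auto].
Qed.

Lemma inIN_zero N t : inIN N t = true -> forall j, (j < N)%nat -> t j = 0%nat.
Proof.
  unfold inIN; rewrite forallb_forall; intros Ht j Hj.
  apply Nat.eqb_eq, Ht, in_seq; lia.
Qed.

(* The Haar measure of [I_N] is [1 / M_N]. *)
Lemma haar_int_cyl_IN_le K N f V : (N <= K)%nat -> 0 <= V ->
  (forall t, inIN N t = true -> f t <= V) ->
  haar_int_cyl m K (fun t => if inIN N t then f t else 0) <= V / INR (Mk m N).
Proof.
  intros HNK HV Hf; unfold haar_int_cyl.
  pose proof (Mk_pos N) as HN; pose proof (Mk_pos K) as HK.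
  destruct (Mk_divide N K HNK) as [P HP].
  assert (HPpos : 0 < INR P) by (apply lt_0_INR; destruct P; lia).
  assert (HNR : 0 < INR (Mk m N)) by (apply lt_0_INR; lia).
  eapply Rle_trans.
  - apply Rmult_le_compat_l; [left; apply Rinv_0_lt_compat, lt_0_INR; auto|].
    apply (sumR_le _ (fun s => if Nat.eqb (s mod Mk m N) 0 then V else 0)).
    intros s _; destruct (inIN N _) eqn:Hin.
    + rewrite digit_eq_0_mod, Nat.eqb_refl by (apply inIN_zero; auto); auto.
    + destruct (Nat.eqb _ 0); lra.
  - rewrite HP, sumR_indicator_mod, mult_INR by auto.
    right; field; lra.
Qed.

Lemma gsub_low x t j : t j = 0%nat -> (x j < m j)%nat -> gsub m x t j = x j.
Proof.
  intros Ht Hx; unfold gsub; rewrite Ht, Nat.sub_0_r.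
  rewrite <- (Nat.mul_1_l (m j)) at 1; rewrite Nat.Div0.mod_add; apply Nat.mod_small; auto.
Qed.

Lemma haar_int_kernel_le q N n k l x :
  (forall j, 0 <= q j) -> (forall j, q j <= q (S j)) -> 0 < q 0%nat ->
  (Mk m N <= n)%nat -> (k < l)%nat -> (l <= N)%nat -> inG m x -> in_INkl N k l x ->
  haar_int_cyl m (S n)
    (fun t => if inIN N t
              then cabs (K_re m q N n (gsub m x t)) (K_im m q N n (gsub m x t))
              else 0)
  <= INR (S (m l) * Mk m l * Mk m (S k)) / INR (Mk m N) / INR (Mk m N).
Proof.
  intros q_nonneg q_nondecr q0_pos Hn Hkl HlN Hx [_ [Hxk [_ Hxl]]].
  pose proof (Mk_pos N).
  apply haar_int_cyl_IN_le.
  - pose proof (Mk_gt N); lia.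
  - apply Rdiv_le_0_compat; [apply pos_INR | apply lt_0_INR; auto].
  - intros t Ht; pose proof (inIN_zero _ _ Ht) as Ht0.
    apply cabs_kernel_le; auto.
    + rewrite gsub_low by (auto; apply Ht0; lia); split; [lia | apply Hx].
    + intros HlN'; apply Nat.ltb_lt in HlN'; rewrite HlN' in Hxl.
      rewrite gsub_low by (auto; apply Ht0; apply Nat.ltb_lt; auto); split; [lia | apply Hx].
Qed.

End MixedRadix.

Theorem mainTheorem7 :
  forall (m : nat -> nat),
    (forall k, (2 <= m k)%nat) ->
    (exists B : nat, forall k, (m k <= B)%nat) ->
  forall (q : nat -> R),
    (forall k, 0 <= q k) ->
    (forall k, q k <= q (S k)) ->
    0 < q 0%nat ->
  exists c : R, 0 < c /\
    forall (N n k l : nat) (x : nat -> nat),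
      (Mk m N <= n)%nat ->
      (k < l)%nat -> (l <= N)%nat ->
      inG m x -> in_INkl N k l x ->
      haar_int_cyl m (S n)
        (fun t => if inIN N t
                  then cabs (K_re m q N n (gsub m x t)) (K_im m q N n (gsub m x t))
                  else 0)
      <= c * INR (Mk m l) * INR (Mk m k) / (INR (Mk m N) * INR (Mk m N)).
Proof.
  intros m m_ge2 [B hB] q q_nonneg q_nondecr q0_pos.
  exists (INR (S B * B)); split.
  { apply lt_0_INR; specialize (hB 0%nat); specialize (m_ge2 0%nat); nia. }
  intros N n k l x Hn Hkl HlN Hx Hxkl.
  eapply Rle_trans; [apply haar_int_kernel_le; eauto|].
  pose proof (Mk_pos m m_ge2 N).
  replace (INR (S B * B) * INR (Mk m l) * INR (Mk m k))
    with (INR (S B * B * Mk m l * Mk m k)) by (rewrite !mult_INR; ring).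
  unfold Rdiv; rewrite Rmult_assoc, <- Rinv_mult.
  apply Rmult_le_compat_r.
  - left; apply Rinv_0_lt_compat, Rmult_lt_0_compat; apply lt_0_INR; auto.
  - apply le_INR; change (Mk m (S k)) with (m k * Mk m k)%nat.
    replace (S (m l) * Mk m l * (m k * Mk m k))%nat
      with (S (m l) * m k * (Mk m l * Mk m k))%nat by ring.
    replace (S B * B * Mk m l * Mk m k)%nat with (S B * B * (Mk m l * Mk m k))%nat by ring.
    apply Nat.mul_le_mono_r, Nat.mul_le_mono; [apply le_n_S|]; auto.
Qed.
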